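(* Let $n\ge5$, let $B=\mathrm{Sym}(n)$ with $+$ denoting composition of permutations, and let $c=(1\,2)$. Define $\lambda_a=\mathrm{id}$ for $a\in\mathrm{Alt}(n)$ and $\lambda_a(b)=c+b-c$ for $a\notin\mathrm{Alt}(n)$, and $a\circ b=a+\lambda_a(b)$. Then $(B,+,\circ)$ is a skew left brace, the set $X$ of all transpositions in $\mathrm{Sym}(n)$ satisfies $r_B(X\times X)=X\times X$, and $(X,r_B|_{X\times X})$ is a simple non-degenerate solution of the Yang--Baxter equation of cardinality $n(n-1)/2$.
   Context: A skew left brace is a triple $(B,+,\circ)$ with $(B,+)$ and $(B,\circ)$ groups and $a\circ(b+c)=a\circ b-a+a\circ c$; then $\lambda_a(b)=-a+a\circ b$, and $a^{-1}$ denotes the $\circ$-inverse. The associated solution is $r_B(a,b)=(\lambda_a(b),\lambda_a(b)^{-1}\circ a\circ b)$. A set-theoretic solution $(X,r)$: $r$ satisfies $(r\times\mathrm{id})(\mathrm{id}\times r)(r\times\mathrm{id})=(\mathrm{id}\times r)(r\times\mathrm{id})(\mathrm{id}\times r)$; writing $r(x,y)=(\lambda_x(y),\rho_y(x))$, non-degenerate means $r$ and all $\lambda_x,\rho_y$ are bijective. A morphism $f\colon(X,r)\to(Y,s)$ is a map with $(f\times f)r=s(f\times f)$; $(X,r)$ with $|X|>1$ is simple if every surjective morphism $(X,r)\to(Y,s)$ is bijective or has $|Y|=1$. *)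

From HB Require Import structures.
From mathcomp Require Import all_boot all_order all_fingroup all_solvable.
Set Implicit Arguments. Unset Strict Implicit. Unset Printing Implicit Defensive.

Definition is_group_law (T : Type) (op : T -> T -> T) : Prop :=
  associative op /\
  exists e : T, (forall x, op e x = x /\ op x e = x) /\
                (forall x, exists y, op x y = e /\ op y x = e).

Definition is_skew_left_brace (T : Type) (add : T -> T -> T) (opp : T -> T)
    (circ : T -> T -> T) : Prop :=
  [/\ associative add,
      exists e : T, (forall x, add e x = x /\ add x e = x) /\
                    (forall x, add x (opp x) = e /\ add (opp x) x = e),
      is_group_law circ &
      forall a b c, circ a (add b c) = add (add (circ a b) (opp a)) (circ a c)].

Definition circ_unit (T : finType) (circ : T -> T -> T) (d : T) : T :=
  odflt d [pick e | [forall x, (circ e x == x) && (circ x e == x)]].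
Definition circ_inv (T : finType) (circ : T -> T -> T) (x : T) : T :=
  odflt x [pick y | (circ x y == circ_unit circ x) && (circ y x == circ_unit circ x)].

Definition brace_lambda (T : Type) (add : T -> T -> T) (opp : T -> T)
    (circ : T -> T -> T) (a b : T) : T := add (opp a) (circ a b).

Definition brace_sol (T : finType) (add : T -> T -> T) (opp : T -> T)
    (circ : T -> T -> T) (p : T * T) : T * T :=
  let l := brace_lambda add opp circ p.1 p.2 in
  (l, circ (circ (circ_inv circ l) p.1) p.2).

Definition r12 (X : Type) (r : X * X -> X * X) (t : X * X * X) : X * X * X :=
  let: (x, y, z) := t in let: (u, v) := r (x, y) in (u, v, z).
Definition r23 (X : Type) (r : X * X -> X * X) (t : X * X * X) : X * X * X :=
  let: (x, y, z) := t in let: (u, v) := r (y, z) in (x, u, v).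

Definition is_solution (X : Type) (r : X * X -> X * X) : Prop :=
  forall t, r12 r (r23 r (r12 r t)) = r23 r (r12 r (r23 r t)).

Definition non_degenerate (X : Type) (r : X * X -> X * X) : Prop :=
  [/\ bijective r,
      forall x, bijective (fun y => (r (x, y)).1) &
      forall y, bijective (fun x => (r (x, y)).2)].

Definition sol_morphism (X Y : Type) (r : X * X -> X * X) (s : Y * Y -> Y * Y)
    (f : X -> Y) : Prop :=
  forall p : X * X, s (f p.1, f p.2) = (f (r p).1, f (r p).2).

Definition simple_solution (X : Type) (r : X * X -> X * X) : Prop :=
  (exists x y : X, x <> y) /\
  forall (Y : Type) (s : Y * Y -> Y * Y) (f : X -> Y),
    is_solution s -> sol_morphism r s f ->
    (forall y : Y, exists x, f x = y) ->
    bijective f \/ (forall y1 y2 : Y, y1 = y2).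

(* "+" on Sym(n) is composition of permutations: (a + b)(x) = a (b x). *)
Definition padd (n : nat) (a b : 'S_n) : 'S_n := (b * a)%g.
Definition popp (n : nat) (a : 'S_n) : 'S_n := (a^-1)%g.

(* c = (1 2), i.e. the transposition of the first two points of 'I_n *)
Definition c12 (n : nat) : 'S_n :=
  match (insub 0 : option 'I_n), (insub 1 : option 'I_n) with
  | Some i, Some j => tperm i j
  | _, _ => 1%g
  end.

Definition lam17 (n : nat) (a b : 'S_n) : 'S_n :=
  if a \in Alt 'I_n then b else padd (padd (c12 n) b) (popp (c12 n)).

Definition circ17 (n : nat) (a b : 'S_n) : 'S_n := padd a (lam17 a b).

Definition rB17 (n : nat) : 'S_n * 'S_n -> 'S_n * 'S_n :=
  brace_sol (@padd n) (@popp n) (@circ17 n).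

Definition transpositions (n : nat) : {set 'S_n} :=
  [set t : 'S_n | [exists i : 'I_n, exists j : 'I_n, (i != j) && (t == tperm i j)]].

Definition Xtype (n : nat) := {t : 'S_n | t \in transpositions n}.

(* restriction of r_B to X x X (well defined once r_B(X x X) = X x X) *)
Definition rX17 (n : nat) (p : Xtype n * Xtype n) : Xtype n * Xtype n :=
  let q := rB17 (val p.1, val p.2) in (insubd p.1 q.1, insubd p.2 q.2).

(* On a transposition a, lambda_a is conjugation by c, so on X the solution is
   r(a, b) = (b^c, a^(c b)), with inverse (u, v) |-> (v^(c u), u^c), and the
   braid relation is a group identity that only uses c * c = 1.
   For simplicity, let f be a morphism of solutions out of X.  Comparing r(x, x)
   with r(x, x') shows that f x = f x' forces f (x^c) = f (x'^c); comparing the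
   second components of r(x^c, t) and r(x'^c, t) then gives f (x^t) = f (x'^t).
   So the fibres of f form an equivalence on transpositions invariant under
   conjugation by Sym(n).  If it identifies two transpositions, a conjugation
   fixing one of them makes it identify two sharing a point, (a b) ~ (a d); by
   3-transitivity (p q) ~ (p r) for all distinct p, q, r, and pivoting through a
   fifth point links any two transpositions.  Otherwise f is injective. *)

From Pilot Require Import Defs.
From mathcomp Require Import all_boot all_order all_fingroup all_solvable zify.
From Stdlib Require Import Classical ClassicalEpsilon.
Set Implicit Arguments. Unset Strict Implicit. Unset Printing Implicit Defensive.
Local Open Scope group_scope.

Lemma circ_unitE (T : finType) (op : T -> T -> T) (e d : T) :
  (forall x, op e x = x /\ op x e = x) -> circ_unit op d = e.
Proof.
move=> unit_e; rewrite /circ_unit; case: pickP => [e' /forallP/(_ e)|/(_ e)] /=.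
  by case/andP=> _ /eqP; case: (unit_e e') => ->.
by apply: contraFeq => _; apply/forallP => x; case: (unit_e x) => -> ->; rewrite !eqxx.
Qed.

Lemma circ_invE (T : finType) (op : T -> T -> T) (e x y : T) :
    associative op -> (forall z, op e z = z /\ op z e = z) ->
  op x y = e -> op y x = e -> circ_inv op x = y.
Proof.
move=> opA unit_e xy yx; rewrite /circ_inv (circ_unitE x unit_e).
case: pickP => [y' /andP[/eqP xy' _]|/(_ y)] /=; last by rewrite xy yx !eqxx.
transitivity (op (op y x) y'); first by rewrite yx; case: (unit_e y').
by rewrite -opA xy'; case: (unit_e y).
Qed.

Section Involution.
Variables (gT : finGroupType) (c : gT).
Hypothesis c_invol : c * c = 1.

Lemma mulKinvol (x : gT) : c * (c * x) = x.
Proof. by rewrite mulgA c_invol mul1g. Qed.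

Lemma invg_invol : c^-1 = c.
Proof. by rewrite -[LHS]mul1g -c_invol mulgK. Qed.

Lemma conjg_invol (x : gT) : x ^ c = c * x * c.
Proof. by rewrite conjgE invg_invol mulgA. Qed.

Lemma conjg_involK (x : gT) : (x ^ c) ^ c = x.
Proof. by rewrite -conjgM c_invol conjg1. Qed.

Lemma mul_conjg_invol (t : gT) : t * t = 1 -> c * t * (c * t ^ c) = 1.
Proof. by move=> t_invol; rewrite conjg_invol -!mulgA mulKinvol (mulgA t) t_invol mul1g. Qed.

Lemma invol_braid_identity (x y : gT) : c * x ^ c * (c * y ^ (c * x)) = c * y * (c * x).
Proof. by rewrite conjgM !conjg_invol conjgE -!mulgA !mulKinvol mulKVg !mulgA. Qed.

End Involution.

Section SkewBrace.
Variable n : nat.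
Local Notation c := (c12 n).

(* Also for n < 2, where [c12 n] is the identity. *)
Lemma c12_mul_self : c * c = 1.
Proof.
rewrite /c12; case: (insub 0%N : option 'I_n) => [i|]; last by rewrite mulg1.
by case: (insub 1%N : option 'I_n) => [j|]; rewrite ?tperm2 ?mulg1.
Qed.

Lemma conjg_c12K (x : 'S_n) : (x ^ c) ^ c = x.
Proof. exact: conjg_involK c12_mul_self x. Qed.

Lemma lam17E (a b : 'S_n) : lam17 a b = if odd_perm a then b ^ c else b.
Proof.
by rewrite /lam17 Alt_even /padd /popp; case: (odd_perm a) => //=; rewrite conjgE mulgA.
Qed.

Lemma lam17_parity (a a' : 'S_n) : odd_perm a = odd_perm a' -> lam17 a =1 lam17 a'.
Proof. by move=> eq_aa' b; rewrite !lam17E eq_aa'. Qed.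

Lemma odd_lam17 (a b : 'S_n) : odd_perm (lam17 a b) = odd_perm b.
Proof. by rewrite lam17E; case: ifP; rewrite ?odd_permJ. Qed.

Lemma lam17M (a x y : 'S_n) : lam17 a (x * y) = lam17 a x * lam17 a y.
Proof. by rewrite !lam17E; case: ifP; rewrite ?conjMg. Qed.

Lemma lam17_1 (a : 'S_n) : lam17 a 1 = 1.
Proof. by rewrite lam17E; case: ifP; rewrite ?conj1g. Qed.

Lemma lam17_1l : lam17 (1 : 'S_n) =1 id.
Proof. by move=> b; rewrite lam17E odd_perm1. Qed.

Lemma lam17K (a : 'S_n) : involutive (lam17 a).
Proof. by move=> b; rewrite !lam17E; case: (odd_perm a); rewrite ?conjg_c12K. Qed.

Lemma circ17E (a b : 'S_n) : circ17 a b = lam17 a b * a.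
Proof. by []. Qed.

Lemma odd_circ17 (a b : 'S_n) : odd_perm (circ17 a b) = odd_perm a (+) odd_perm b.
Proof. by rewrite circ17E odd_permM odd_lam17 addbC. Qed.

Lemma lam17_circ17 (a b d : 'S_n) : lam17 (circ17 a b) d = lam17 a (lam17 b d).
Proof.
by rewrite !lam17E odd_circ17; case: (odd_perm a); case: (odd_perm b); rewrite /= ?conjg_c12K.
Qed.

Lemma circ17A : associative (@circ17 n).
Proof. by move=> a b d; rewrite !circ17E lam17_circ17 lam17M mulgA. Qed.

Lemma circ17_unit (x : 'S_n) : circ17 1 x = x /\ circ17 x 1 = x.
Proof. by rewrite !circ17E lam17_1l lam17_1 mulg1 mul1g. Qed.

Lemma brace17 : is_skew_left_brace (@padd n) (@popp n) (@circ17 n).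
Proof.
split.
- by move=> a b d; rewrite /padd mulgA.
- by exists 1; split=> x; rewrite /padd /popp ?mulg1 ?mul1g ?mulgV ?mulVg.
- split; first exact: circ17A.
  exists 1; split=> [|x]; first exact: circ17_unit.
  exists (lam17 x x^-1); rewrite !circ17E lam17K mulVg; split=> //.
  by rewrite (@lam17_parity _ x) ?odd_lam17 ?odd_permV // -lam17M mulgV lam17_1.
- by move=> a b d; rewrite /padd /popp !circ17E lam17M !mulgA mulgK.
Qed.

End SkewBrace.

Section Transpositions.
Variable n : nat.
Local Notation T := (transpositions n).

Lemma transpositionsP (t : 'S_n) :
  reflect (exists i j, i != j /\ t = tperm i j) (t \in T).
Proof.
rewrite inE; apply: (iffP existsP) => [[i /existsP[j /andP[ij /eqP ->]]]|[i [j [ij ->]]]].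
  by exists i, j.
by exists i; apply/existsP; exists j; rewrite ij eqxx.
Qed.

Lemma tperm_transposition (i j : 'I_n) : i != j -> tperm i j \in T.
Proof. by move=> ij; apply/transpositionsP; exists i, j. Qed.

Lemma transpositionJ (t g : 'S_n) : t \in T -> t ^ g \in T.
Proof.
case/transpositionsP=> i [j [ij ->]]; rewrite tpermJ.
by apply: tperm_transposition; rewrite (inj_eq perm_inj).
Qed.

Lemma odd_transposition (t : 'S_n) : t \in T -> odd_perm t.
Proof. by case/transpositionsP=> i [j [ij ->]]; rewrite odd_tperm. Qed.

Lemma transposition_mul_self (t : 'S_n) : t \in T -> t * t = 1.
Proof. by case/transpositionsP=> i [j [ij ->]]; rewrite tperm2. Qed.

Lemma transpositionV (t : 'S_n) : t \in T -> t^-1 = t.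
Proof. by case/transpositionsP=> i [j [ij ->]]; rewrite tpermV. Qed.

Lemma tperm_in2 (i j k l : 'I_n) :
  k != l -> k \in [set i; j] -> l \in [set i; j] -> tperm k l = tperm i j.
Proof.
rewrite !inE => kl /orP[]/eqP ki /orP[]/eqP li; move: kl;
  by rewrite ki li ?eqxx // tpermC.
Qed.

Definition perm_support (s : 'S_n) : {set 'I_n} := [set i | s i != i].

Lemma perm_support_tperm (i j : 'I_n) : i != j -> perm_support (tperm i j) = [set i; j].
Proof.
move=> ij; apply/setP => k; rewrite !inE.
case: tpermP => [->|->|ki kj]; first by rewrite eq_sym ij eqxx.
  by rewrite ij eqxx orbT.
by rewrite eqxx; apply/esym/norP; split; apply/eqP.
Qed.

Lemma card_transpositions : #|T| = n * (n - 1) %/ 2.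
Proof.
have support_inj : {in T &, injective perm_support}.
  move=> s t /transpositionsP[i [j [ij ->]]] /transpositionsP[k [l [kl ->]]].
  rewrite !perm_support_tperm // => eq_ij_kl.
  by apply/esym/tperm_in2; rewrite // eq_ij_kl !inE eqxx ?orbT.
rewrite -(card_in_imset support_inj).
have -> : perm_support @: T = [set A : {set 'I_n} | #|A| == 2].
  apply/setP => A; rewrite inE; apply/imsetP/cards2P.
    by case=> _ /transpositionsP[i [j [ij ->]]] ->; exists i, j; rewrite perm_support_tperm.
  case=> i [j [ij ->]]; exists (tperm i j); first exact: tperm_transposition.
  by rewrite perm_support_tperm.
by rewrite card_draws card_ord bin2 -divn2 subn1.
Qed.

End Transpositions.

Section Solution.
Variable n : nat.
Local Notation c := (c12 n).
Local Notation T := (transpositions n).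
Local Notation X := (Xtype n).

Lemma brace_lambda17 (a b : 'S_n) : brace_lambda (@padd n) (@popp n) (@circ17 n) a b = lam17 a b.
Proof. by rewrite /brace_lambda /padd /popp circ17E mulgK. Qed.

Lemma circ_inv17_conj (b : 'S_n) : b \in T -> circ_inv (@circ17 n) (b ^ c) = b.
Proof.
move=> Tb; have odd_bc : odd_perm (b ^ c) by rewrite odd_permJ odd_transposition.
apply: (circ_invE (e := 1)); [exact: circ17A | exact: circ17_unit | |];
  rewrite circ17E lam17E.
  by rewrite odd_bc -conjMg transposition_mul_self // conj1g.
by rewrite odd_transposition // conjg_c12K transposition_mul_self.
Qed.

Lemma rB17E (a b : 'S_n) : a \in T -> b \in T -> rB17 (a, b) = (b ^ c, a ^ (c * b)).
Proof.
move=> Ta Tb; rewrite /rB17 /brace_sol /= brace_lambda17 lam17E odd_transposition //.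
rewrite circ_inv17_conj // !circ17E !lam17E (odd_transposition Tb).
rewrite odd_permM odd_permJ (odd_transposition Ta) (odd_transposition Tb) /=.
by rewrite conjgM [(a ^ c) ^ b]conjgE transpositionV // mulgA.
Qed.

Lemma rB17_inv (u v : 'S_n) : u \in T -> v \in T -> rB17 (v ^ (c * u), u ^ c) = (u, v).
Proof.
move=> Tu Tv; rewrite rB17E ?transpositionJ // conjg_c12K -conjgM.
by rewrite mul_conjg_invol ?c12_mul_self ?transposition_mul_self ?conjg1.
Qed.

Lemma rB17_image_transpositions : [set rB17 p | p in setX T T] = setX T T.
Proof.
apply/setP => -[u v]; apply/imsetP/setXP => [[[a b] /setXP[Ta Tb]]|[Tu Tv]].
  by rewrite rB17E // => -[-> ->]; split; apply: transpositionJ.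
exists (v ^ (c * u), u ^ c); last by rewrite rB17_inv.
by apply/setXP; split; apply: transpositionJ.
Qed.

Definition conjX (x : X) (g : 'S_n) : X := exist _ (val x ^ g) (transpositionJ g (valP x)).

Lemma conjXM (x : X) (g h : 'S_n) : conjX (conjX x g) h = conjX x (g * h).
Proof. by apply: val_inj; rewrite /= conjgM. Qed.

Lemma conjX1 (x : X) : conjX x 1 = x.
Proof. by apply: val_inj; rewrite /= conjg1. Qed.

Lemma rX17E (x y : X) : rX17 (x, y) = (conjX y c, conjX x (c * val y)).
Proof.
rewrite /rX17 -/(rB17 (val x, val y)) rB17E ?(valP x) ?(valP y) //.
by congr pair; apply: val_inj; rewrite /= insubdK // transpositionJ ?(valP x) ?(valP y).
Qed.

(* [Defs.] disambiguates from the [r12] of mathcomp's burnside_app. *)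
Lemma r12E (A : Type) (r : A * A -> A * A) x y z :
  Defs.r12 r (x, y, z) = ((r (x, y)).1, (r (x, y)).2, z).
Proof. by rewrite /Defs.r12; case: (r (x, y)). Qed.

Lemma r23E (A : Type) (r : A * A -> A * A) x y z :
  Defs.r23 r (x, y, z) = (x, (r (y, z)).1, (r (y, z)).2).
Proof. by rewrite /Defs.r23; case: (r (y, z)). Qed.

Lemma rX17_solution : is_solution (@rX17 n).
Proof.
move=> [[x y] z]; rewrite !(r12E, r23E, rX17E) /=.
congr (_, _, _); apply: val_inj; rewrite /= -!conjgM; congr (_ ^ _).
  by rewrite mulKinvol ?conjg_invol // c12_mul_self.
by rewrite invol_braid_identity // c12_mul_self.
Qed.

Definition rX17_inv (p : X * X) : X * X := (conjX p.2 (c * val p.1), conjX p.1 c).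

Lemma mul_conjg_c12_transposition (x : X) : c * val x * (c * val x ^ c) = 1.
Proof. by rewrite mul_conjg_invol ?c12_mul_self ?transposition_mul_self ?(valP x). Qed.

Lemma rX17K : cancel (@rX17 n) rX17_inv.
Proof.
by move=> [x y]; rewrite rX17E /rX17_inv /= !conjXM mul_conjg_c12_transposition
  c12_mul_self !conjX1.
Qed.

Lemma rX17_invK : cancel rX17_inv (@rX17 n).
Proof.
by move=> [u v]; rewrite /rX17_inv rX17E /= !conjXM mul_conjg_c12_transposition
  c12_mul_self !conjX1.
Qed.

Lemma rX17_non_degenerate : non_degenerate (@rX17 n).
Proof.
split=> [|x|y]; first by exists rX17_inv; [exact: rX17K | exact: rX17_invK].
  by exists (conjX^~ c) => y; rewrite rX17E /= conjXM c12_mul_self conjX1.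
by exists (conjX^~ (c * val y)^-1) => x; rewrite rX17E /= conjXM ?mulgV ?mulVg conjX1.
Qed.

End Solution.

Section TranspositionFibres.
Variables (n : nat) (Y : Type) (F : 'S_n -> Y).
Local Notation T := (transpositions n).
Hypothesis F_conj : forall s t g : 'S_n,
  s \in T -> t \in T -> g \in T -> F s = F t -> F (s ^ g) = F (t ^ g).

Definition glued (a b d : 'I_n) :=
  [/\ a != b, a != d, b != d & F (tperm a b) = F (tperm a d)].

Lemma gluedJ (u v a b d : 'I_n) :
  glued a b d -> glued (tperm u v a) (tperm u v b) (tperm u v d).
Proof.
case=> ab ad bd Fabd; have [<-|uv] := eqVneq u v; first by rewrite tperm1 !perm1.
split; rewrite ?(inj_eq perm_inj) // -!tpermJ.
by apply: F_conj; rewrite ?tperm_transposition.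
Qed.

Lemma glued_all (a b d p q r : 'I_n) :
  glued a b d -> p != q -> p != r -> q != r -> F (tperm p q) = F (tperm p r).
Proof.
(* Move a, b, d to p, q, r one at a time, each transposition fixing the points
   already placed. *)
move=> /(gluedJ a p); rewrite tpermL.
move: (tperm a p b) (tperm a p d) => b1 d1 glued1 pq pr qr.
have [pb1 _ _ _] := glued1; move: glued1 => /(gluedJ b1 q).
rewrite tpermL tpermD 1?eq_sym //; move: (tperm b1 q d1) => d2 glued2.
have [_ pd2 qd2 _] := glued2; move: glued2 => /(gluedJ d2 r).
by rewrite tpermL !tpermD 1?eq_sym //; case.
Qed.

Lemma exists_fresh (l : seq 'I_n) : size l < n -> exists m, m \notin l.
Proof.
move=> small; case: (pickP [pred m | m \notin l]) => [m fresh_m|none]; first by exists m.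
suff : n <= size l by rewrite leqNgt small.
rewrite -{1}(card_ord n); apply: leq_trans (card_size l); apply: subset_leq_card.
by apply/subsetP => m _; move/negbFE: (none m).
Qed.

Hypothesis n_ge5 : 5 <= n.

Lemma glued_exists (i j k l : 'I_n) : i != j -> k != l ->
  tperm i j != tperm k l -> F (tperm i j) = F (tperm k l) -> exists a b d, glued a b d.
Proof.
move=> ij; wlog l_fresh : k l / l \notin [set i; j] => [gen kl ne Fijkl|].
  have [li|l_fresh] := boolP (l \in [set i; j]); last by apply: gen l_fresh kl ne Fijkl.
  have ki : k \notin [set i; j].
    by apply: contra ne => ki; rewrite (tperm_in2 kl ki li) eqxx.
  by apply: (gen l k ki); [rewrite eq_sym | rewrite [tperm l k]tpermC | rewrite [tperm l k]tpermC].
(* Conjugating by (l m), m fresh, fixes (i j) and sends (k l) to (k m). *)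
move=> kl _ Fijkl; move: l_fresh; rewrite !inE negb_or => /andP[li lj].
have [m] : exists m, m \notin [:: i; j; k; l] by apply: exists_fresh; apply: leq_trans n_ge5.
rewrite !inE !negb_or => /and4P[mi mj mk ml].
have lm : l != m by rewrite eq_sym.
have lk : l != k by rewrite eq_sym.
have := F_conj (tperm_transposition ij) (tperm_transposition kl) (tperm_transposition lm) Fijkl.
rewrite !tpermJ tpermL (tpermD li mi) (tpermD lj mj) (tpermD lk mk) => Fijkm.
by exists k, l, m; split; rewrite 1?eq_sym // -Fijkl.
Qed.

Lemma glued_tperm_eq (a b d p q r w : 'I_n) : glued a b d ->
  p != q -> r != w -> F (tperm p q) = F (tperm r w).
Proof.
move=> glued_abd pq rw.
have pivot e x y : e != x -> e != y -> F (tperm e x) = F (tperm e y).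
  by have [-> //|xy ex ey] := eqVneq x y; apply: glued_all glued_abd _ _ _.
have [m] : exists m, m \notin [:: p; q; r; w] by apply: exists_fresh; apply: leq_trans n_ge5.
rewrite !inE !negb_or => /and4P[mp mq mr mw].
have [pm rm] : p != m /\ r != m by rewrite !(eq_sym _ m).
by rewrite (pivot p q m pq pm) tpermC (pivot m p r mp mr) tpermC (pivot r m w rm rw).
Qed.

Lemma transposition_fibre_total (s t u v : 'S_n) : s \in T -> t \in T -> s != t ->
  F s = F t -> u \in T -> v \in T -> F u = F v.
Proof.
move=> /transpositionsP[i [j [ij ->]]] /transpositionsP[k [l [kl ->]]] ne Fst.
move=> /transpositionsP[p [q [pq ->]]] /transpositionsP[r [w [rw ->]]].
have [a [b [d glued_abd]]] := glued_exists ij kl ne Fst.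
exact: glued_tperm_eq glued_abd pq rw.
Qed.

End TranspositionFibres.

Lemma inj_onto_bijective (A B : Type) (f : A -> B) :
  injective f -> (forall y, exists x, f x = y) -> bijective f.
Proof.
move=> f_inj f_onto; pose g y := proj1_sig (constructive_indefinite_description _ (f_onto y)).
exists g => [x|y]; rewrite /g; case: constructive_indefinite_description => //= x'.
exact: f_inj.
Qed.

Section Simplicity.
Variable n : nat.
Local Notation c := (c12 n).
Local Notation T := (transpositions n).
Local Notation X := (Xtype n).

Lemma morph_fibre_conjX (Y : Type) (s : Y * Y -> Y * Y) (f : X -> Y) (x x' t : X) :
  sol_morphism (@rX17 n) s f -> f x = f x' -> f (conjX x (val t)) = f (conjX x' (val t)).
Proof.
move=> f_morph fxx'.
have fxc : f (conjX x c) = f (conjX x' c).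
  by move: (f_morph (x, x)) (f_morph (x, x')); rewrite !rX17E /= -fxx' => -> [].
move: (f_morph (conjX x c, t)) (f_morph (conjX x' c, t)).
rewrite !rX17E /= fxc => -> [].
by rewrite !conjXM mulKinvol ?c12_mul_self.
Qed.

Lemma rX17_simple : 5 <= n -> simple_solution (@rX17 n).
Proof.
move=> n_ge5; split.
  have : 1 < #|T| by rewrite card_transpositions; lia.
  case/card_gt1P=> a [b [Ta Tb ab]]; exists (exist _ a Ta), (exist _ b Tb).
  by move/(congr1 val)/eqP; apply/negP.
move=> Y s f _ f_morph f_onto.
have [[x [x' [xx' fxx']]]|f_inj] := classic (exists x x' : X, x <> x' /\ f x = f x').
  right=> y1 y2; have [[x1 <-] [x2 <-]] := (f_onto y1, f_onto y2).
  pose F g := f (insubd x g).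
  have F_val (z : X) : f z = F (val z) by rewrite /F valKd.
  have F_conj a b g : a \in T -> b \in T -> g \in T -> F a = F b -> F (a ^ g) = F (b ^ g).
    move=> Ta Tb Tg.
    have insubdJ z : z \in T -> insubd x (z ^ g) = conjX (insubd x z) (val (insubd x g)).
      by move=> Tz; apply: val_inj; rewrite /= !insubdK ?transpositionJ.
    by rewrite /F !insubdJ //; apply: morph_fibre_conjX.
  have xx'_val : val x != val x' by apply/eqP => /val_inj.
  rewrite !F_val; apply: (transposition_fibre_total F_conj n_ge5 (valP x) (valP x') xx'_val);
    by rewrite -?F_val ?(valP x1) ?(valP x2).
left; apply: inj_onto_bijective => // y y' fyy'.
by apply: NNPP => yy'; apply: f_inj; exists y, y'.
Qed.

End Simplicity.

Theorem mainTheorem17 (n : nat) (hn : 5 <= n) :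
  is_skew_left_brace (@padd n) (@popp n) (@circ17 n) /\
  [set rB17 p | p in setX (transpositions n) (transpositions n)]
    = setX (transpositions n) (transpositions n) /\
  is_solution (@rX17 n) /\
  non_degenerate (@rX17 n) /\
  simple_solution (@rX17 n) /\
  #|transpositions n| = n * (n - 1) %/ 2.
Proof.
split; first exact: brace17.
split; first exact: rB17_image_transpositions.
split; first exact: rX17_solution.
split; first exact: rX17_non_degenerate.
split; first exact: rX17_simple.
exact: card_transpositions.
Qed.
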